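(* Let $V = \{v_1, \dots, v_d\}$ be totally ordered by $v_1 < \cdots < v_d$. Let $\Gamma$ be the order complex (complex of chains) of the poset of intervals $[v_i, v_j] = \{v_i, v_{i+1}, \dots, v_j\}$, $1 \le i \le j \le d$, ordered by inclusion. For a chain $G \in \Gamma$, let $\sigma(G) \subseteq V$ be the set of all endpoints $v_i, v_j$ of the intervals $[v_i, v_j]$ in $G$. Then $\sigma : \Gamma \to 2^V$ makes $\Gamma$ a geometric simplicial subdivision of the simplex $2^V$. Moreover, $\Gamma$ has exactly $2^{d-1}$ facets.
   Context: A simplicial subdivision of $2^V$ is a simplicial complex $\Gamma$ with a map $\sigma : \Gamma \to 2^V$ such that, for each $F \subseteq V$, $\sigma^{-1}(2^F)$ is a subcomplex homeomorphic to a ball of dimension $|F|-1$ whose interior is $\sigma^{-1}(F)$. It is geometric if there is a geometric realization of $\Gamma$ that triangulates a geometric simplex realizing $2^V$, with each face $G$ of $\Gamma$ realized inside the face $\sigma(G)$ of that simplex, and with the relative interior of $G$ contained in the relative interior of $\sigma(G)$. *)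

From HB Require Import structures.
From mathcomp Require Import all_boot all_order all_algebra.
Set Implicit Arguments. Unset Strict Implicit. Unset Printing Implicit Defensive.
Import Order.TTheory GRing.Theory Num.Theory.

(* V = {v_1 < ... < v_d} is modelled by 'I_d with its natural order.      *)
Definition interval (d : nat) := {p : 'I_d * 'I_d | (p.1 <= p.2)%N}.

Definition ilo d (I : interval d) : 'I_d := (val I).1.
Definition ihi d (I : interval d) : 'I_d := (val I).2.

Definition isub d (I J : interval d) : bool :=
  (ilo J <= ilo I)%N && (ihi I <= ihi J)%N.

Definition is_chain d (G : {set interval d}) : bool :=
  [forall I in G, forall J in G, isub I J || isub J I].

(* Gamma = order complex (all chains, including the empty chain) *)
Definition Gamma d : {set {set interval d}} := [set G | is_chain G].

Definition sigma d (G : {set interval d}) : {set 'I_d} :=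
  \bigcup_(I in G) [set ilo I; ihi I].

Definition facets T (K : {set {set T}}) : {set {set T}} :=
  [set G | maxset (fun H => H \in K) G].

(* The geometric simplex realizing 2^V is the standard simplex in R^d,   *)
(* with vertex v_i at the i-th unit vector; its face F is the set of     *)
(* points supported in F, its relative interior those with support = F.  *)
Local Open Scope ring_scope.
Section Geom.
Variables (R : realFieldType) (d : nat) (T : finType).

Definition in_simplex (x : 'rV[R]_d) : Prop :=
  (forall i, 0 <= x ord0 i) /\ \sum_i x ord0 i = 1.

Definition in_face (F : {set 'I_d}) (x : 'rV[R]_d) : Prop :=
  in_simplex x /\ (forall i, i \notin F -> x ord0 i = 0).

Definition in_face_relint (F : {set 'I_d}) (x : 'rV[R]_d) : Prop :=
  in_simplex x /\ (forall i, (i \in F -> 0 < x ord0 i) /\ (i \notin F -> x ord0 i = 0)).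

Variable f : T -> 'rV[R]_d.

Definition in_conv (G : {set T}) (x : 'rV[R]_d) : Prop :=
  exists lam : T -> R,
    [/\ forall v, v \notin G -> lam v = 0,
        forall v, 0 <= lam v,
        \sum_v lam v = 1
      & x = \sum_v lam v *: f v].

Definition in_relint (G : {set T}) (x : 'rV[R]_d) : Prop :=
  exists lam : T -> R,
    [/\ forall v, v \notin G -> lam v = 0,
        forall v, v \in G -> 0 < lam v,
        \sum_v lam v = 1
      & x = \sum_v lam v *: f v].

Definition aff_indep (G : {set T}) : Prop :=
  forall lam : T -> R,
    (forall v, v \notin G -> lam v = 0) ->
    \sum_v lam v = 0 -> \sum_v lam v *: f v = 0 ->
    forall v, lam v = 0.

(* f is a geometric realization of the complex K (faces are geometric     *)
(* simplices meeting in common faces) triangulating the standard simplex, *)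
(* each face G realized inside the face sigma(G) of the simplex, with the *)
(* relative interior of G inside the relative interior of sigma(G).       *)
Definition geometric_subdivision_realization
    (K : {set {set T}}) (sig : {set T} -> {set 'I_d}) : Prop :=
  [/\ forall G, G \in K -> aff_indep G,
      forall G H, G \in K -> H \in K ->
        forall x, (in_conv G x /\ in_conv H x) <-> in_conv (G :&: H) x,
      forall x, in_simplex x <-> exists2 G, G \in K & in_conv G x,
      forall G, G \in K -> forall x, in_conv G x -> in_face (sig G) x
    & forall G, G \in K -> forall x, in_relint G x -> in_face_relint (sig G) x].

End Geom.

Definition geometric_subdivision (R : realFieldType) (d : nat) (T : finType)
    (K : {set {set T}}) (sig : {set T} -> {set 'I_d}) : Prop :=
  exists f : T -> 'rV[R]_d, geometric_subdivision_realization f K sig.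

(* Place the vertex [v_i, v_j] of Gamma at the midpoint (e_i + e_j)/2 of the
   standard simplex.  Let x = sum_J lam_J (e_lo J + e_hi J)/2 with lam >= 0
   supported on a chain.  The largest interval I of the chain is the hull of
   the support of x, and lam_I is forced: the other intervals are nested inside
   I, so they cannot reach both ends of I, and at one of these ends x is
   contributed by I alone; thus lam_I * mid_I(lo I) is the smaller of the two
   end values of x.
   Peeling I off and recursing shows that every point of the simplex has
   exactly one such representation, which gives all the properties of a
   geometric subdivision.  A maximal chain of intervals of [a, a + n] has n + 1
   elements: [a, a + n] followed by a maximal chain of [a + 1, a + n] or of
   [a, a + n - 1]; hence there are 2^n of them. *)

From Pilot Require Import Defs.
From HB Require Import structures.
From mathcomp Require Import all_boot all_order all_algebra.
From mathcomp Require Import zify.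
Set Implicit Arguments. Unset Strict Implicit. Unset Printing Implicit Defensive.
Import Order.TTheory GRing.Theory Num.Theory.

Local Notation itv := Defs.interval.

Section IntervalChains.
Variable d : nat.
Implicit Types (I J T : itv d) (C D : {set itv d}).

Definition len I := (ihi I - ilo I)%N.
Definition within (a b : nat) I := (a <= ilo I) && (ihi I <= b).

Lemma ilo_le_ihi I : ilo I <= ihi I. Proof. exact: valP I. Qed.

Lemma interval_inj I J : ilo I = ilo J :> nat -> ihi I = ihi J :> nat -> I = J.
Proof.
case: I J => [[a b] ?] [[a' b'] ?]; rewrite /ilo /ihi /= => /val_inj ea /val_inj eb.
by apply: val_inj; rewrite /= ea eb.
Qed.

Lemma exists_interval a b : a <= b -> b < d -> exists I, ilo I = a :> nat /\ ihi I = b :> nat.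
Proof.
move=> ab bd; have ad : a < d := leq_ltn_trans ab bd.
by exists (exist _ (Ordinal ad, Ordinal bd) ab).
Qed.

Lemma isub_refl I : isub I I. Proof. by rewrite /isub !leqnn. Qed.

Lemma isub_len_eq I J : isub I J -> len J <= len I -> I = J.
Proof.
rewrite /isub /len => /andP[? ?] ?; have ? := ilo_le_ihi I; have ? := ilo_le_ihi J.
by apply: interval_inj; lia.
Qed.

Lemma chainP C :
  reflect (forall I J, I \in C -> J \in C -> isub I J || isub J I) (is_chain C).
Proof.
apply: (iffP forall_inP) => [h I J /h /forall_inP|h I IC]; first by apply.
by apply/forall_inP => J; apply: h.
Qed.

Lemma subset_chain C D : D \subset C -> is_chain C -> is_chain D.
Proof. by move=> /subsetP sDC /chainP hC; apply/chainP => I J /sDC + /sDC; apply: hC. Qed.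

Lemma chain_setU1_max C T : is_chain C -> (forall I, I \in C -> isub I T) ->
  is_chain (T |: C).
Proof.
move=> /chainP hC hT; apply/chainP => I J /setU1P[->|IC] /setU1P[->|JC].
- by rewrite isub_refl.
- by rewrite hT ?orbT.
- by rewrite hT.
- exact: hC.
Qed.

Lemma chain_max C : is_chain C -> C != set0 ->
  exists2 T, T \in C & forall I, I \in C -> isub I T.
Proof.
move=> /chainP hC /set0Pn[I0 I0C].
case: (arg_maxnP len I0C) => T TC Tmax; exists T => // I IC.
by case/orP: (hC _ _ TC IC) => // TI; rewrite (isub_len_eq TI (Tmax I IC)) isub_refl.
Qed.

Definition max_chains (a n : nat) : {set {set itv d}} :=
  [set C | [&& is_chain C, [forall I in C, within a (a + n) I] & #|C| == n.+1]].

Lemma max_chainsP a n C :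
  reflect [/\ is_chain C, forall I, I \in C -> within a (a + n) I & #|C| = n.+1]
    (C \in max_chains a n).
Proof.
rewrite inE; apply: (iffP and3P) => [[? /forall_inP ? /eqP ?]|[? ? ?]] //.
by split => //; [apply/forall_inP | apply/eqP].
Qed.

Lemma card_chain_within a n C : is_chain C ->
  (forall I, I \in C -> within a (a + n) I) -> #|C| <= n.+1.
Proof.
move=> /chainP hC hw.
pose g I : 'I_n.+1 := inord (len I).
have gE I : I \in C -> g I = len I :> nat.
  by move=> /hw /andP[? ?]; rewrite inordK // /len; lia.
rewrite -(card_in_imset (f := g)); first by rewrite (leq_trans (max_card _)) ?card_ord.
move=> I J IC JC /(congr1 (@nat_of_ord _)); rewrite !gE // => eIJ.
by case/orP: (hC _ _ IC JC) => /isub_len_eq -> //; rewrite eIJ.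
Qed.

Section MaxInterval.
Variables (a n : nat) (T : itv d).
Hypotheses (Tlo : ilo T = a :> nat) (Thi : ihi T = a + n.+1 :> nat).

Lemma chain_without_max C :
  is_chain C -> (forall I, I \in C -> within a (a + n.+1) I) -> T \notin C ->
  (forall I, I \in C -> within a.+1 (a.+1 + n) I) \/
  (forall I, I \in C -> within a (a + n) I).
Proof.
move=> /chainP hC hw TC.
have neT I : I \in C -> I != T by apply: contraTneq => ->.
have [/exists_inP[I IC /eqP Ilo]|/exists_inPn noI] :=
  boolP [exists I in C, ilo I == a :> nat]; last first.
  by left=> I IC; move: (noI I IC) (hw I IC); rewrite /within; lia.
have [/exists_inP[J JC /eqP Jhi]|/exists_inPn noJ] :=
  boolP [exists J in C, ihi J == a + n.+1 :> nat]; last first.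
  by right=> K KC; move: (noJ K KC) (hw K KC); rewrite /within; lia.
move: (hw I IC) (hw J JC) (neT I IC) (neT J JC); rewrite /within.
case/orP: (hC _ _ IC JC); rewrite /isub => /andP[? ?] /andP[? ?] /andP[? ?].
- by move=> _ /negP[]; apply/eqP; apply: interval_inj; lia.
- by move=> /negP[]; apply/eqP; apply: interval_inj; lia.
Qed.

Lemma max_chains_setU1 C : C \in max_chains a.+1 n :|: max_chains a n ->
  T |: C \in max_chains a n.+1 /\ T \notin C.
Proof.
have within_T I : within a (a + n.+1) I -> isub I T.
  by rewrite /within /isub Tlo Thi.
move=> CU; have [hC hw cardC] : [/\ is_chain C,
    forall I, I \in C -> within a (a + n.+1) I /\ I != T & #|C| = n.+1].
  case/setUP: CU => /max_chainsP[hC hw cardC]; split=> // I /hw /andP[? ?];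
  (split; first by rewrite /within; apply/andP; split; lia);
  by apply/eqP=> eIT; move: Tlo Thi; rewrite -eIT; lia.
have TC : T \notin C by apply/negP=> /hw[_]; rewrite eqxx.
split=> //; apply/max_chainsP; split.
- by apply: chain_setU1_max => // I /hw[/within_T].
- by move=> I /setU1P[->|/hw[]//]; rewrite /within Tlo Thi !leqnn.
- by rewrite cardsU1 TC cardC.
Qed.

Lemma max_chains_succ :
  max_chains a n.+1 = (fun C => T |: C) @: (max_chains a.+1 n :|: max_chains a n).
Proof.
apply/setP => D; apply/idP/imsetP => [/max_chainsP[hD hw cardD]|[C CU ->]]; last first.
  by case: (max_chains_setU1 CU).
have hD' : is_chain (D :\ T) by apply: subset_chain hD; apply: subsetDl.
have hw' I : I \in D :\ T -> within a (a + n.+1) I by move=> /setD1P[_ /hw].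
have TD : T \in D.
  apply: contraT => TD; suff: #|D| <= n.+1 by rewrite cardD ltnn.
  have [] := chain_without_max hD hw TD; exact: card_chain_within.
have cardD' : #|D :\ T| = n.+1 by move: cardD; rewrite (cardsD1 T) TD => -[].
exists (D :\ T); last by rewrite setD1K.
have [] := chain_without_max hD' hw' (negbT (setD11 T D)) => hw'';
  apply/setUP; [left|right]; exact/max_chainsP.
Qed.

End MaxInterval.

Lemma max_chains_disjoint a n : [disjoint max_chains a.+1 n & max_chains a n].
Proof.
apply/pred0P => C /=; apply/negP => /andP[/max_chainsP[hC w1 cardC] /max_chainsP[_ w2 _]].
have [I IC] : exists I, I \in C by apply/set0Pn; rewrite -card_gt0 cardC.
case: n w1 w2 cardC => [|m] w1 w2 cardC.
  by move: (w1 I IC) (w2 I IC); rewrite /within; have := ilo_le_ihi I; lia.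
suff: #|C| <= m.+1 by rewrite cardC ltnn.
apply: (card_chain_within (a := a.+1) hC) => J JC.
by move: (w1 J JC) (w2 J JC) => /andP[? ?] /andP[? ?]; apply/andP; split; lia.
Qed.

Lemma within_point a T I : ilo T = a :> nat -> ihi T = a :> nat ->
  within a (a + 0) I -> I = T.
Proof.
by rewrite addn0 => ? ? /andP[? ?]; have ? := ilo_le_ihi I; apply: interval_inj; lia.
Qed.

Lemma max_chains0 a T : ilo T = a :> nat -> ihi T = a :> nat ->
  max_chains a 0 = [set [set T]].
Proof.
move=> Tlo Thi; have within_T := within_point Tlo Thi.
apply/setP => D; rewrite in_set1; apply/max_chainsP/eqP => [[_ hw /eqP/cards1P[I eD]]|->].
  by rewrite eD (within_T I) // hw // eD set11.
split; last exact: cards1.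
- by apply/chainP => I J /set1P-> /set1P->; rewrite isub_refl.
- by move=> I /set1P->; rewrite /within Tlo Thi addn0 leqnn.
Qed.

Lemma card_max_chains a n : a + n < d -> #|max_chains a n| = 2 ^ n.
Proof.
elim: n a => [|n IHn] a lt_and.
  have [T [Tlo Thi]] := exists_interval (leqnn a) (leq_ltn_trans (leq_addr 0 a) lt_and).
  by rewrite (max_chains0 Tlo Thi) cards1.
have [T [Tlo Thi]] := exists_interval (leq_addr n.+1 a) lt_and.
rewrite (max_chains_succ Tlo Thi) card_in_imset; last first.
  move=> C1 C2 /(max_chains_setU1 Tlo Thi)[_ TC1] /(max_chains_setU1 Tlo Thi)[_ TC2] /= e.
  by rewrite -(setU1K TC1) -(setU1K TC2) e.
rewrite cardsU (disjoint_setI0 (max_chains_disjoint a n)) cards0 subn0.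
by rewrite !IHn ?expnS ?mul2n ?addnn //; lia.
Qed.

Lemma chain_extends a n C : a + n < d -> is_chain C ->
  (forall I, I \in C -> within a (a + n) I) -> exists2 D, D \in max_chains a n & C \subset D.
Proof.
elim: n a C => [|n IHn] a C lt_and hC hw.
  have [T [Tlo Thi]] := exists_interval (leqnn a) (leq_ltn_trans (leq_addr 0 a) lt_and).
  exists [set T]; first by rewrite (max_chains0 Tlo Thi) set11.
  by apply/subsetP => I /hw /(within_point Tlo Thi)->; rewrite set11.
have [T [Tlo Thi]] := exists_interval (leq_addr n.+1 a) lt_and.
have hC' : is_chain (C :\ T) by apply: subset_chain hC; apply: subsetDl.
have hw' I : I \in C :\ T -> within a (a + n.+1) I by move=> /setD1P[_ /hw].
have [D' D'U sCD'] : exists2 D', D' \in max_chains a.+1 n :|: max_chains a n & C :\ T \subset D'.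
  have [] := chain_without_max Tlo Thi hC' hw' (negbT (setD11 T C)) => hw''.
    have [|D D1 sCD] := IHn a.+1 _ _ hC' hw''; first by rewrite addSnnS.
    by exists D => //; apply/setUP; left.
  have [|D D1 sCD] := IHn a _ _ hC' hw''; first by rewrite (leq_ltn_trans _ lt_and) ?leq_add2l.
  by exists D => //; apply/setUP; right.
exists (T |: D'); first by case: (max_chains_setU1 Tlo Thi D'U).
by rewrite -subDset.
Qed.

End IntervalChains.

Lemma facets_Gamma m : facets (Gamma m.+1) = max_chains m.+1 0 m.
Proof.
have within_all (I : itv m.+1) : within 0 (0 + m) I.
  by rewrite /within leq0n add0n -ltnS ltn_ord.
apply/setP => G; rewrite inE; apply/maxsetP/idP => [[]|/max_chainsP[hG _ cardG]].
  rewrite inE => hG Gmax.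
  have [D D1 sGD] := chain_extends (a := 0) (leqnn m.+1) hG (fun I _ => within_all I).
  by rewrite -(Gmax D) // inE; case/max_chainsP: D1.
split=> [|D]; first by rewrite inE.
rewrite inE => hD sGD; apply/eqP; rewrite eq_sym eqEcard sGD cardG.
exact: card_chain_within hD (fun I _ => within_all I).
Qed.

Lemma card_facets_Gamma d : #|facets (Gamma d)| = 2 ^ (d - 1).
Proof.
case: d => [|m]; last by rewrite facets_Gamma card_max_chains ?subn1.
have all0 (G : {set itv 0}) : G = set0 by apply/setP => -[[[]]].
suff -> : facets (Gamma 0) = [set set0] by rewrite cards1.
apply/setP => G; rewrite !inE (all0 G) eqxx.
apply/maxsetP; split=> [|D _ _]; last by rewrite (all0 D).
by rewrite inE; apply/chainP => I; rewrite inE.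
Qed.

Section MidpointCombinations.
Variables (R : realFieldType) (d : nat).
Local Open Scope ring_scope.
Implicit Types (I J : itv d) (lam mu : itv d -> R) (k : 'I_d).

Definition mid I k : R := ((ilo I == k)%:R + (ihi I == k)%:R) / 2.

Lemma mid_ge0 I k : 0 <= mid I k.
Proof. by rewrite divr_ge0 ?addr_ge0 ?ler0n. Qed.

Lemma sum_mid I : \sum_k mid I k = 1.
Proof.
have sum_eq (i : 'I_d) : \sum_k ((i == k)%:R : R) = 1.
  by rewrite (bigD1 i) //= eqxx big1 ?addr0 // => k; rewrite eq_sym => /negbTE->.
by rewrite -mulr_suml big_split /= !sum_eq -mulr2n divff // pnatr_eq0.
Qed.

Lemma mid_eq0 I k : k != ilo I -> k != ihi I -> mid I k = 0.
Proof. by rewrite /mid ![k == _]eq_sym => /negbTE-> /negbTE->; rewrite addr0 mul0r. Qed.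

Lemma mid_ihi I : mid I (ihi I) = mid I (ilo I).
Proof. by rewrite /mid !eqxx (eq_sym (ihi I)) addrC. Qed.

Lemma mid_ilo_gt0 I : 0 < mid I (ilo I).
Proof. by rewrite /mid eqxx divr_gt0 ?ltr_pwDl ?ler0n. Qed.

(* The [k]-th coordinate of the point with barycentric coordinates [lam]. *)
Definition pt lam k := \sum_J lam J * mid J k.
Definition supp lam := [set J | lam J != 0].
Definition nonneg lam := forall J, 0 <= lam J.

Lemma pt_ge0 lam k : nonneg lam -> 0 <= pt lam k.
Proof. by move=> lam_ge0; rewrite sumr_ge0 // => J _; rewrite mulr_ge0 ?mid_ge0. Qed.

Lemma pt_endpoints_gt0 lam J : nonneg lam -> J \in supp lam ->
  0 < pt lam (ilo J) /\ 0 < pt lam (ihi J).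
Proof.
rewrite inE => lam_ge0 lamJ.
suff lt k : 0 < mid J k -> 0 < pt lam k by rewrite !lt ?mid_ihi ?mid_ilo_gt0.
move=> midJ; apply: (@lt_le_trans _ _ (lam J * mid J k)).
  by rewrite mulr_gt0 // lt_def lamJ lam_ge0.
rewrite /pt (bigD1 J) //= lerDl sumr_ge0 // => I _.
by rewrite mulr_ge0 ?mid_ge0.
Qed.

Lemma pt_neq0 lam k : pt lam k != 0 ->
  exists2 J, J \in supp lam & (k == ilo J) || (k == ihi J).
Proof.
move=> ptk; have [/exists_inP[J JS kJ]|/exists_inPn none] :=
  boolP [exists J in supp lam, (k == ilo J) || (k == ihi J)]; first by exists J.
case/eqP: ptk; apply: big1 => J _; have [JS|] := boolP (J \in supp lam).
  by move: (none J JS); rewrite negb_or => /andP[? ?]; rewrite mid_eq0 ?mulr0.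
by rewrite inE negbK => /eqP->; rewrite mul0r.
Qed.

Lemma coef_eq0 lam : nonneg lam -> (forall k, pt lam k = 0) -> forall J, lam J = 0.
Proof.
move=> lam_ge0 pt0 J; apply/eqP; apply: contraT => lamJ.
have JS : J \in supp lam by rewrite inE.
by have [] := pt_endpoints_gt0 lam_ge0 JS; rewrite pt0 ltxx.
Qed.

Lemma pt_hull lam I : (forall J, J \in supp lam -> isub J I) ->
  forall k, pt lam k != 0 -> (ilo I <= k <= ihi I)%N.
Proof.
move=> Imax k /pt_neq0[J /Imax]; have := ilo_le_ihi J.
by rewrite /isub => ? /andP[? ?] /orP[] /eqP->; apply/andP; split; lia.
Qed.

Lemma supp_max_eq lam mu I I' : nonneg lam -> nonneg mu -> pt lam =1 pt mu ->
  I \in supp lam -> (forall J, J \in supp lam -> isub J I) ->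
  I' \in supp mu -> (forall J, J \in supp mu -> isub J I') -> I = I'.
Proof.
move=> lam_ge0 mu_ge0 eq_pt IS Imax I'S I'max.
have [lo_gt0 hi_gt0] := pt_endpoints_gt0 lam_ge0 IS.
have [lo'_gt0 hi'_gt0] := pt_endpoints_gt0 mu_ge0 I'S.
have in_I' k : 0 < pt lam k -> (ilo I' <= k <= ihi I')%N.
  by move=> ?; apply: (pt_hull I'max); rewrite -eq_pt gt_eqF.
have in_I k : 0 < pt mu k -> (ilo I <= k <= ihi I)%N.
  by move=> ?; apply: (pt_hull Imax); rewrite eq_pt gt_eqF.
move: (in_I' _ lo_gt0) (in_I' _ hi_gt0) (in_I _ lo'_gt0) (in_I _ hi'_gt0).
by move=> /andP[? ?] /andP[? ?] /andP[? ?] /andP[? ?]; apply: interval_inj; lia.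
Qed.

Definition del_coef I lam J := if J == I then 0 else lam J.

Lemma pt_del_coef lam I k : pt lam k = pt (del_coef I lam) k + lam I * mid I k.
Proof.
rewrite /pt (bigD1 I) //= [X in _ = X + _](bigD1 I) //= /del_coef eqxx mul0r add0r addrC.
by congr (_ + _); apply: eq_bigr => J /negbTE->.
Qed.

Lemma supp_del_coef lam I : supp (del_coef I lam) = supp lam :\ I.
Proof.
by apply/setP => J; rewrite !inE /del_coef; case: (eqVneq J I) => [->|]; rewrite ?eqxx.
Qed.

Lemma nonneg_del_coef lam I : nonneg lam -> nonneg (del_coef I lam).
Proof. by move=> lam_ge0 J; rewrite /del_coef; case: eqP. Qed.

(* Two intervals of the chain below [I], one with endpoint [ilo I] and one with
   endpoint [ihi I], are nested, so the larger one has both and is [I]. *)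
Lemma pt_del_max_eq0 lam I : is_chain (supp lam) ->
  (forall J, J \in supp lam -> isub J I) ->
  pt (del_coef I lam) (ilo I) = 0 \/ pt (del_coef I lam) (ihi I) = 0.
Proof.
move=> /chainP hlam Imax.
case: (eqVneq (pt (del_coef I lam) (ilo I)) 0) => [|/pt_neq0[J]]; first by left.
case: (eqVneq (pt (del_coef I lam) (ihi I)) 0) => [|/pt_neq0[J']]; first by right.
rewrite !supp_del_coef => /setD1P[J'I J'S] hiJ' /setD1P[JI JS] loJ.
have := Imax J JS; have := Imax J' J'S; have := ilo_le_ihi J; have := ilo_le_ihi J'.
have : ilo I = ilo J :> nat \/ ilo I = ihi J :> nat by case/orP: loJ => /eqP->; auto.
have : ihi I = ilo J' :> nat \/ ihi I = ihi J' :> nat by case/orP: hiJ' => /eqP->; auto.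
rewrite /isub => ? ? ? ? /andP[? ?] /andP[? ?].
case/orP: (hlam J J' JS J'S) => /andP[? ?]; [case/negP: J'I | case/negP: JI];
by apply/eqP; apply: interval_inj; lia.
Qed.

Lemma max_coef lam I : nonneg lam -> is_chain (supp lam) ->
  (forall J, J \in supp lam -> isub J I) ->
  lam I * mid I (ilo I) = Num.min (pt lam (ilo I)) (pt lam (ihi I)).
Proof.
move=> lam_ge0 hlam Imax; rewrite !(pt_del_coef lam I) mid_ihi.
have del_ge0 k : 0 <= pt (del_coef I lam) k := pt_ge0 k (nonneg_del_coef I lam_ge0).
case: (pt_del_max_eq0 hlam Imax) => ->; rewrite add0r; [apply/esym/min_l | apply/esym/min_r].
all: by rewrite lerDr.
Qed.

Lemma supp_eq0 lam : supp lam = set0 -> forall J, lam J = 0.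
Proof. by move=> /setP lam0 J; have := lam0 J; rewrite !inE => /negbFE/eqP. Qed.

Lemma chain_coef_unique lam mu : nonneg lam -> nonneg mu ->
  is_chain (supp lam) -> is_chain (supp mu) -> pt lam =1 pt mu -> lam =1 mu.
Proof.
have [n] := ubnP #|supp lam|; elim: n lam mu => // n IHn lam mu card_lam.
move=> lam_ge0 mu_ge0 hlam hmu eq_pt.
have [/supp_eq0 lam0|lam_neq0] := eqVneq (supp lam) set0.
  have pt0 k : pt mu k = 0 by rewrite -eq_pt /pt big1 // => J _; rewrite lam0 mul0r.
  by move=> J; rewrite lam0 (coef_eq0 mu_ge0 pt0).
have [I IS Imax] := chain_max hlam lam_neq0.
have [lo_gt0 _] := pt_endpoints_gt0 lam_ge0 IS.
have mu_neq0 : supp mu != set0.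
  by rewrite eq_pt in lo_gt0; have [J JS _] := pt_neq0 (lt0r_neq0 lo_gt0); apply/set0Pn; exists J.
have [I' I'S I'max] := chain_max hmu mu_neq0.
have eII' := supp_max_eq lam_ge0 mu_ge0 eq_pt IS Imax I'S I'max; subst I'.
have eqI : lam I = mu I.
  by apply: (mulIf (lt0r_neq0 (mid_ilo_gt0 I))); rewrite /= !max_coef // !eq_pt.
have eq_del : del_coef I lam =1 del_coef I mu.
  apply: IHn; rewrite ?supp_del_coef.
  - by move: card_lam; rewrite (cardsD1 I) IS.
  - exact: nonneg_del_coef.
  - exact: nonneg_del_coef.
  - by apply: subset_chain hlam; apply: subsetDl.
  - by apply: subset_chain hmu; apply: subsetDl.
  - by move=> k; apply: (addIr (lam I * mid I k)); rewrite -pt_del_coef eqI -pt_del_coef.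
by move=> J; have := eq_del J; rewrite /del_coef; case: eqP => [->|].
Qed.

Lemma pt_add_coef lam I t k :
  pt (fun J => lam J + (J == I)%:R * t) k = pt lam k + t * mid I k.
Proof.
rewrite /pt (eq_bigr (fun J => lam J * mid J k + (J == I)%:R * (t * mid J k))).
  rewrite big_split /=; congr (_ + _).
  by rewrite (bigD1 I) //= eqxx mul1r big1 ?addr0 // => J /negbTE->; rewrite mul0r.
by move=> J _; rewrite mulrDl mulrA.
Qed.

Lemma support_hull (x : 'I_d -> R) : [set k | x k != 0] != set0 ->
  exists I, [/\ x (ilo I) != 0, x (ihi I) != 0 &
                forall k, x k != 0 -> (ilo I <= k <= ihi I)%N].
Proof.
move=> /set0Pn[k0]; rewrite inE => k0S.
have [lo loS lo_min] := @arg_minnP _ k0 (fun k => x k != 0) val k0S.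
have [hi hiS hi_max] := @arg_maxnP _ k0 (fun k => x k != 0) val k0S.
have lohi := lo_min hi hiS.
exists (exist _ (lo, hi) lohi); split=> // k xk.
by apply/andP; split; [exact: lo_min | exact: hi_max].
Qed.

(* [t] is as large as nonnegativity allows, so [x] dies at one end of [I]. *)
Lemma peel_hull (x : 'I_d -> R) I t : (forall k, 0 <= x k) ->
  x (ilo I) != 0 -> x (ihi I) != 0 ->
  t * mid I (ilo I) = Num.min (x (ilo I)) (x (ihi I)) ->
  (forall k, 0 <= x k - t * mid I k) /\
  (#|[set k | (x k - t * mid I k != 0)%R]| < #|[set k | (x k != 0)%R]|)%N.
Proof.
move=> x_ge0 xlo xhi tmid; set m := Num.min _ _ in tmid.
have yE k : x k - t * mid I k = x k - if (k == ilo I) || (k == ihi I) then m else 0.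
  case: (eqVneq k (ilo I)) => [->|klo]; first by rewrite tmid.
  case: (eqVneq k (ihi I)) => [->|khi]; first by rewrite mid_ihi tmid orbT.
  by rewrite mid_eq0 ?mulr0.
split=> [k|].
  by rewrite yE; case: ifP => [/orP[]/eqP->|_]; rewrite subr_ge0 ?ge_min ?lexx ?orbT ?subr0.
pose j := if x (ilo I) <= x (ihi I) then ilo I else ihi I.
have xj : x j != 0 by rewrite /j; case: ifP.
have jI : (j == ilo I) || (j == ihi I) by rewrite /j; case: ifP; rewrite eqxx ?orbT.
have yj : x j - m = 0.
  by rewrite /m /j; case: leP => h; rewrite ?min_l ?min_r ?subrr // ltW.
apply: (leq_ltn_trans (n := #|[set k | x k != 0] :\ j|)); last first.
  by rewrite (cardsD1 j [set k | x k != 0]) inE xj.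
apply/subset_leq_card/subsetP => k; rewrite !inE => yk; apply/andP; split.
  by apply: contraNneq yk => ->; rewrite yE jI yj.
by move: yk; rewrite yE; case: ifP => [/orP[]/eqP->|_]; rewrite ?xlo ?xhi ?subr0.
Qed.

Lemma chain_coef_exists (x : 'I_d -> R) : (forall k, 0 <= x k) ->
  exists lam, [/\ nonneg lam, is_chain (supp lam) & pt lam =1 x].
Proof.
have [n] := ubnP #|[set k | x k != 0]|; elim: n x => // n IHn x card_x x_ge0.
have [x0|x_neq0] := eqVneq [set k | x k != 0] set0.
  exists (fun=> 0); split=> //; first by apply/chainP => I J; rewrite inE eqxx.
  move=> k; rewrite /pt big1 => [|J _]; last by rewrite mul0r.
  by move/setP/(_ k): x0; rewrite !inE => /negbFE/eqP.
have [I [xlo xhi hull]] := support_hull x_neq0.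
pose t := Num.min (x (ilo I)) (x (ihi I)) / mid I (ilo I).
have t_ge0 : 0 <= t by rewrite divr_ge0 ?mid_ge0 // le_min !x_ge0.
have tmid : t * mid I (ilo I) = Num.min (x (ilo I)) (x (ihi I)).
  by rewrite divfK // lt0r_neq0 ?mid_ilo_gt0.
have [y_ge0 card_y] := peel_hull x_ge0 xlo xhi tmid.
have [|lam [lam_ge0 hlam pt_lam]] := IHn _ _ y_ge0; first exact: leq_trans card_y _.
have lam_sub J : J \in supp lam -> isub J I.
  move=> JS; have [lo_gt0 hi_gt0] := pt_endpoints_gt0 lam_ge0 JS.
  have in_I k : 0 < pt lam k -> (ilo I <= k <= ihi I)%N.
    rewrite pt_lam => yk; apply: hull; apply: contraTneq yk => xk0.
    by rewrite xk0 sub0r oppr_gt0 -leNgt mulr_ge0 ?mid_ge0.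
  by move: (in_I _ lo_gt0) (in_I _ hi_gt0) => /andP[? _] /andP[_ ?]; apply/andP.
exists (fun J => lam J + (J == I)%:R * t); split.
- by move=> J; apply: addr_ge0 => //; apply: mulr_ge0.
- apply: subset_chain (chain_setU1_max hlam lam_sub).
  apply/subsetP => J; rewrite !inE.
  by case: (eqVneq J I) => //= _; rewrite mul0r addr0.
- by move=> k; rewrite pt_add_coef pt_lam subrK.
Qed.

End MidpointCombinations.

Section Realization.
Variables (R : realFieldType) (d : nat).
Local Open Scope ring_scope.
Implicit Types (G H : {set itv d}) (lam mu : itv d -> R) (x : 'rV[R]_d).

Definition realize (I : itv d) : 'rV[R]_d := \row_k mid R I k.

Lemma realize_combE lam k : (\sum_J lam J *: realize J) ord0 k = pt lam k.
Proof. by rewrite summxE; apply: eq_bigr => J _; rewrite !mxE. Qed.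

Lemma sum_pt lam : \sum_k pt lam k = \sum_J lam J.
Proof. by rewrite exchange_big; apply: eq_bigr => J _; rewrite -mulr_sumr sum_mid mulr1. Qed.

Lemma chain_supp G lam : is_chain G -> (forall J, J \notin G -> lam J = 0) ->
  is_chain (supp lam).
Proof.
move=> hG lam0; apply: subset_chain hG; apply/subsetP => J.
by rewrite inE; apply: contraR => /lam0->.
Qed.

Lemma pt_off_sigma G lam k : (forall J, J \notin G -> lam J = 0) ->
  k \notin sigma G -> pt lam k = 0.
Proof.
move=> lam0 kG; apply: big1 => J _; have [JG|/lam0->] := boolP (J \in G); last first.
  by rewrite mul0r.
by rewrite mid_eq0 ?mulr0 //; apply: contraNneq kG => ->; apply/bigcupP; exists J;
  rewrite // !inE eqxx ?orbT.
Qed.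

Lemma in_conv_simplex G x : in_conv realize G x -> in_simplex x.
Proof.
case=> lam [_ lam_ge0 sum1 ->]; split=> [k|]; first by rewrite realize_combE pt_ge0.
by rewrite -sum1 -sum_pt; apply: eq_bigr => k _; rewrite realize_combE.
Qed.

Lemma realize_aff_indep G : G \in Gamma d -> aff_indep realize G.
Proof.
rewrite inE => hG lam lam0 _ comb0.
pose lp J := Num.max (lam J) 0; pose lm J := lp J - lam J.
have lp0 J : J \notin G -> lp J = 0 by move/lam0; rewrite /lp => ->; rewrite maxxx.
have lm0 J : J \notin G -> lm J = 0 by move=> JG; rewrite /lm lp0 // lam0 ?subr0.
have pt_lam k : pt lam k = 0 by rewrite -realize_combE comb0 mxE.
have eq_pt : pt lp =1 pt lm.
  move=> k; rewrite -[LHS]subr0 -(pt_lam k) /pt -sumrB.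
  by apply: eq_bigr => J _; rewrite mulrBl.
have lp_ge0 J : 0 <= lp J by rewrite le_max lexx orbT.
have lm_ge0 J : 0 <= lm J by rewrite subr_ge0 le_max lexx.
move=> J; have := chain_coef_unique lp_ge0 lm_ge0 (chain_supp hG lp0) (chain_supp hG lm0) eq_pt J.
by rewrite /lm => /eqP; rewrite eq_sym subr_eq addrC -subr_eq subrr => /eqP<-.
Qed.

Lemma in_conv_setI G H : G \in Gamma d -> H \in Gamma d -> forall x,
  (in_conv realize G x /\ in_conv realize H x) <-> in_conv realize (G :&: H) x.
Proof.
rewrite !inE => hG hH x; split=> [[[lam [lam0 lam_ge0 sum1 ->]] [mu [mu0 mu_ge0 _ xE]]]|].
  have eq_pt : pt lam =1 pt mu by move=> k; rewrite -!realize_combE xE.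
  have := chain_coef_unique lam_ge0 mu_ge0 (chain_supp hG lam0) (chain_supp hH mu0) eq_pt.
  move=> eq_lam; exists lam; split=> // J; rewrite in_setI negb_and => /orP[/lam0|/mu0] //.
  by rewrite eq_lam.
case=> lam [lam0 lam_ge0 sum1 xE]; split; exists lam; split=> // J JG; apply: lam0;
  by rewrite in_setI negb_and JG ?orbT.
Qed.

Lemma simplex_covered x :
  in_simplex x <-> exists2 G, G \in Gamma d & in_conv realize G x.
Proof.
split=> [[x_ge0 sum1]|[G _ /in_conv_simplex//]].
have [lam [lam_ge0 hlam pt_lam]] := chain_coef_exists x_ge0.
exists (supp lam); first by rewrite inE.
exists lam; split=> //.
- by move=> J; rewrite inE negbK => /eqP.
- by rewrite -sum_pt -sum1; apply: eq_bigr => k _; rewrite pt_lam.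
- by apply/rowP => k; rewrite realize_combE pt_lam.
Qed.

Lemma in_conv_face G x : in_conv realize G x -> in_face (sigma G) x.
Proof.
move=> xG; split; first exact: in_conv_simplex xG.
by case: xG => lam [lam0 _ _ ->] k kG; rewrite realize_combE (pt_off_sigma lam0).
Qed.

Lemma in_relint_face G x : in_relint realize G x -> in_face_relint (sigma G) x.
Proof.
case=> lam [lam0 lam_gt0 sum1 xE].
have lam_ge0 : nonneg lam.
  by move=> J; have [/lam_gt0/ltW|/lam0->] := boolP (J \in G).
split; first by apply: (@in_conv_simplex G); exists lam.
move=> k; rewrite xE realize_combE; split; last exact: pt_off_sigma.
move=> /bigcupP[J JG]; rewrite !inE => kJ.
have JS : J \in supp lam by rewrite inE lt0r_neq0 ?lam_gt0.
by have [] := pt_endpoints_gt0 lam_ge0 JS; case/orP: kJ => /eqP->.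
Qed.

Lemma realize_geometric :
  geometric_subdivision_realization realize (Gamma d) (@sigma d).
Proof.
split; [exact: realize_aff_indep | exact: in_conv_setI | exact: simplex_covered |
        by move=> G _; exact: in_conv_face | by move=> G _; exact: in_relint_face].
Qed.

End Realization.

Theorem lemma6p2 (d : nat) :
  (forall R : realFieldType, geometric_subdivision R (Gamma d) (@sigma d))
  /\ #|facets (Gamma d)| = 2 ^ (d - 1).
Proof.
split; last exact: card_facets_Gamma.
by move=> R; exists (@realize R d); exact: realize_geometric.
Qed.
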